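(* Let $\gamma:S^1\to\mathbb{R}^{2d}$ be a closed symplectically convex curve, parametrized so that $\omega(\gamma'(t),\gamma''(t))=1$ for all $t$. Let $X=\{(v,t)\in\mathbb{R}^{2d}\times S^1:\omega(v,\gamma'(t))=0\}$, $\Psi:X\to\mathbb{R}^{2d}$, $\Psi(v,t)=\gamma(t)+v$, and let $\Sigma$ (the wall) be the set of singular values of $\Psi$. Then $$\Sigma=\{P\in\mathbb{R}^{2d}:\exists t\in S^1\ \text{with}\ \omega(P,\gamma'(t))=\omega(\gamma(t),\gamma'(t))\ \text{and}\ \omega(P,\gamma''(t))=\omega(\gamma(t),\gamma''(t))\}.$$ Moreover, the set $\Sigma^{\mathrm{sing}}$ of singular points of $\Sigma$ consists of those $P\in\mathbb{R}^{2d}$ for which there exists $t\in S^1$ with $\omega(P,\gamma'(t))=\omega(\gamma(t),\gamma'(t))$, $\omega(P,\gamma''(t))=\omega(\gamma(t),\gamma''(t))$, and $\omega(P,\gamma'''(t))=\omega(\gamma'(t),\gamma''(t))+\omega(\gamma(t),\gamma'''(t))$.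
   Context: $\mathbb{R}^{2d}$ carries the standard symplectic form $\omega$. A curve $\gamma$ is symplectically convex if $\omega(\gamma'(t),\gamma''(t))>0$ for all $t$. The image of $\Psi$ is the domain of the outer symplectic billiard relation of $\gamma$. Let $\Delta=\{(P,t)\in\mathbb{R}^{2d}\times S^1:\omega(P-\gamma(t),\gamma'(t))=0,\ \omega(P-\gamma(t),\gamma''(t))=0\}$ (a smooth $(2d-1)$-manifold), so that $\Sigma$ is its projection to $\mathbb{R}^{2d}$; a singular point of $\Sigma$ is a point $P$ such that for some $(P,t)\in\Delta$ the differential of the projection $\Delta\to\mathbb{R}^{2d}$ at $(P,t)$ has rank less than $2d-1$. *)

From mathcomp Require Import all_boot all_algebra.
From mathcomp Require Import all_classical all_reals all_analysis.
Import GRing.Theory Num.Theory numFieldNormedType.Exports.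
Set Implicit Arguments. Unset Strict Implicit. Unset Printing Implicit Defensive.
Local Open Scope ring_scope.

(* R^{2d} is 'rV[R]_(d + d); coordinates (x_1..x_d, y_1..y_d). *)
Definition omega (R : realType) (d : nat) (u v : 'rV[R]_(d + d)) : R :=
  \sum_(i < d) (u ord0 (lshift d i) * v ord0 (rshift d i)
                - u ord0 (rshift d i) * v ord0 (lshift d i)).

(* k-th derivative of the curve (S^1 realised as R with period 1). *)
Definition dgamma (R : realType) (d : nat) (k : nat)
  (gamma : R -> 'rV[R]_(d + d)) : R -> 'rV[R]_(d + d) := derive1n k gamma.

Definition X_eq (R : realType) (d : nat) (gamma : R -> 'rV[R]_(d + d))
  (x : 'rV[R]_(d + d) * R) : R := omega x.1 (dgamma 1 gamma x.2).

Definition Psi (R : realType) (d : nat) (gamma : R -> 'rV[R]_(d + d))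
  (x : 'rV[R]_(d + d) * R) : 'rV[R]_(d + d) := gamma x.2 + x.1.

Definition tangent_X (R : realType) (d : nat) (gamma : R -> 'rV[R]_(d + d))
  (x : 'rV[R]_(d + d) * R) : set ('rV[R]_(d + d) * R) :=
  [set y : 'rV[R]_(d + d) * R | 'd (X_eq gamma) x y = 0].

(* The wall Sigma: singular values of Psi : X -> R^{2d}, i.e. images of points
   x of X at which d Psi restricted to T_x X is not surjective. *)
Definition wall (R : realType) (d : nat) (gamma : R -> 'rV[R]_(d + d)) :
  set 'rV[R]_(d + d) :=
  [set P | exists x : 'rV[R]_(d + d) * R,
     [/\ X_eq gamma x = 0, Psi gamma x = P &
         exists w : 'rV[R]_(d + d),
           forall y, tangent_X gamma x y -> 'd (Psi gamma) x y <> w]].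

Definition Delta_eq (R : realType) (d : nat) (gamma : R -> 'rV[R]_(d + d))
  (x : 'rV[R]_(d + d) * R) : R * R :=
  (omega (x.1 - gamma x.2) (dgamma 1 gamma x.2),
   omega (x.1 - gamma x.2) (dgamma 2 gamma x.2)).

Definition tangent_Delta (R : realType) (d : nat) (gamma : R -> 'rV[R]_(d + d))
  (x : 'rV[R]_(d + d) * R) : set ('rV[R]_(d + d) * R) :=
  [set y : 'rV[R]_(d + d) * R | 'd (Delta_eq gamma) x y = 0].

Definition proj_Delta (R : realType) (d : nat) (x : 'rV[R]_(d + d) * R) :
  'rV[R]_(d + d) := x.1.

Definition rank_dproj_ge (R : realType) (d : nat) (gamma : R -> 'rV[R]_(d + d))
  (x : 'rV[R]_(d + d) * R) (k : nat) : Prop :=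
  exists B : 'M[R]_(k, d + d),
    row_free B /\
    forall i : 'I_k, exists y, tangent_Delta gamma x y /\
                               'd (@proj_Delta R d) x y = row i B.

(* Singular points of Sigma: P with (P,t) in Delta for some t at which the
   differential of the projection has rank < 2d - 1. *)
Definition wall_sing (R : realType) (d : nat) (gamma : R -> 'rV[R]_(d + d)) :
  set 'rV[R]_(d + d) :=
  [set P | exists t : R, Delta_eq gamma (P, t) = (0, 0) /\
                         ~ rank_dproj_ge gamma (P, t) ((d + d).-1)].

From HB Require Import structures.
From mathcomp Require Import all_boot all_algebra.
From mathcomp Require Import all_classical all_reals all_analysis.
From mathcomp Require Import ring lra zify.
Import GRing.Theory Num.Theory numFieldNormedType.Exports.
Local Open Scope ring_scope.

(* Write Q = P - gamma t.  The tangent space of X at (v, t) is cut out by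
   s omega(v, gamma'') + omega(a, gamma') = 0, and the differential of Psi there is
   (a, s) |-> a + s gamma'.  It is onto when omega(v, gamma'') <> 0, and misses gamma''
   otherwise because omega(gamma'', gamma') = -1; hence the wall is the projection of
   Delta.  At a point of Delta the tangent space of Delta is
   { (a, s) | omega(a, gamma') = 0, s (1 - omega(Q, gamma''')) = omega(a, gamma'') },
   so its projection is the symplectic annihilator of gamma', of rank 2d - 1, unless
   omega(Q, gamma''') = 1, where it is the annihilator of gamma' and gamma'', of rank
   2d - 2.  Both ranks follow from nondegeneracy: (-gamma'', gamma') is a dual family
   for (gamma', gamma''). *)

Section Differentials.
Context {R : numFieldType}.

Lemma is_diff_linear {U W : normedModType R} {f : U -> W} x :
  linear f -> continuous f -> is_diff x f f.
Proof.
move=> lin_f cont_f.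
pose L : {linear U -> W} := HB.pack f (GRing.isLinear.Build _ _ _ _ f lin_f).
apply: DiffDef; first exact: (linear_differentiable (f := L)).
exact: (diff_lin (f := L)).
Qed.

Lemma is_diff_fst {U V : normedModType R} (x : U * V) : is_diff x fst fst.
Proof. by apply: is_diff_linear => [a u v|p]; last exact: cvg_fst. Qed.

Lemma is_diff_snd {U V : normedModType R} (x : U * V) : is_diff x snd snd.
Proof. by apply: is_diff_linear => [a u v|p]; last exact: cvg_snd. Qed.

Lemma is_diff_coord {U : normedModType R} {m n} (F dF : U -> 'M[R]_(m, n)) i j x :
  is_diff x F dF -> is_diff x (fun z => F z i j) (fun y => dF y i j).
Proof.
have lin_ij : linear (fun A : 'M[R]_(m, n) => A i j) by move=> a A B; rewrite !mxE.
move=> FdF; exact: is_diff_comp FdF (is_diff_linear _ lin_ij (@coord_continuous _ m n i j)).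
Qed.

Lemma is_diff_sum {U W : normedModType R} {n} (f df : 'I_n -> U -> W) x :
  (forall i, is_diff x (f i) (df i)) ->
  is_diff x (fun z => \sum_i f i z) (fun y => \sum_i df i y).
Proof.
move=> fdf; rewrite -!fct_sumE.
elim/big_ind2: _ => // [|dg1 g1 dg2 g2]; first exact: (is_diff_cst (0 : W)).
exact: is_diffD.
Qed.

End Differentials.

Section Symplectic.
Context {R : realType} {d : nat}.
Implicit Types u v w : 'rV[R]_(d + d).

Lemma omegaDl u v w : omega (u + v) w = omega u w + omega v w.
Proof. by rewrite /omega -big_split; apply: eq_bigr => i _ /=; rewrite !mxE; ring. Qed.

Lemma omegaNl u w : omega (- u) w = - omega u w.
Proof. by rewrite /omega -sumrN; apply: eq_bigr => i _ /=; rewrite !mxE; ring. Qed.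

Lemma omegaBl u v w : omega (u - v) w = omega u w - omega v w.
Proof. by rewrite omegaDl omegaNl. Qed.

Lemma omegaZl (k : R) u w : omega (k *: u) w = k * omega u w.
Proof. by rewrite /omega mulr_sumr; apply: eq_bigr => i _ /=; rewrite !mxE; ring. Qed.

Lemma omega0l w : omega 0 w = 0.
Proof. by rewrite -(scale0r 0) omegaZl mul0r. Qed.

Lemma omega_suml I r (P : pred I) (F : I -> 'rV[R]_(d + d)) w :
  omega (\sum_(i <- r | P i) F i) w = \sum_(i <- r | P i) omega (F i) w.
Proof. by elim/big_rec2: _ => [|i u v _ <-]; [exact: omega0l | exact: omegaDl]. Qed.

Lemma omegaC u v : omega u v = - omega v u.
Proof. by rewrite /omega -sumrN; apply: eq_bigr => i _ /=; ring. Qed.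

Lemma omegaZr (k : R) u w : omega w (k *: u) = k * omega w u.
Proof. by rewrite omegaC omegaZl omegaC mulrN opprK. Qed.

Lemma omegavv u : omega u u = 0.
Proof. by rewrite /omega big1 // => i _; ring. Qed.

Lemma dim_gt0_omega u v : omega u v != 0 -> (0 < d)%N.
Proof. by case: d u v => // u v; rewrite /omega big_ord0 eqxx. Qed.

Lemma is_diff_omega {U : normedModType R} {F G dF dG : U -> 'rV[R]_(d + d)} {x} :
  is_diff x F dF -> is_diff x G dG ->
  is_diff x (fun z => omega (F z) (G z))
            (fun y => omega (F x) (dG y) + omega (dF y) (G x)).
Proof.
move=> FdF GdG.
apply: is_diff_eq; first by apply: is_diff_sum => i;
  apply: is_diffB; apply: is_diffM; apply: is_diff_coord.
apply/funext => y; rewrite /omega -big_split; apply: eq_bigr => i _ /=.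
by rewrite !fctE /= -![_ *: _]/(_ * _); ring.
Qed.

End Symplectic.

Lemma exists_row_base {R : fieldType} {m n} {A : 'M[R]_(m, n)} {k} :
  \rank A = k -> exists2 B : 'M[R]_(k, n), row_free B & (B <= A)%MS.
Proof. by move=> <-; exists (row_base A); [exact: row_base_free | rewrite eq_row_base]. Qed.

Section Annihilator.
Context {R : realType} {d : nat}.
Implicit Types (a : 'rV[R]_(d + d)) (s : seq 'rV[R]_(d + d)).

Definition omega_mx s : 'M[R]_(d + d, size s) :=
  \matrix_(j, k) omega (delta_mx 0 j) s`_k.

Lemma mul_omega_mx s a k : (a *m omega_mx s) 0 k = omega a s`_k.
Proof.
rewrite mxE [in RHS](row_sum_delta a) omega_suml.
by apply: eq_bigr => j _; rewrite mxE omegaZl.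
Qed.

Definition annihilator s := kermx (omega_mx s).

Lemma sub_annihilatorP s a :
  reflect {in s, forall c, omega a c = 0} (a <= annihilator s)%MS.
Proof.
apply: (iffP sub_kermxP) => [aM0 _ /(nthP 0)[k ks <-]|a0].
  by rewrite -(mul_omega_mx _ _ (Ordinal ks)) aM0 mxE.
by apply/rowP => k; rewrite mul_omega_mx mxE a0 // mem_nth.
Qed.

Lemma rank_omega_mx s (dual : seq 'rV[R]_(d + d)) :
  (forall i k : 'I_(size s), omega dual`_i s`_k = (i == k)%:R) ->
  \rank (omega_mx s) = size s.
Proof.
move=> dualP; pose D := \matrix_(i < size s) dual`_i.
have DM1 : D *m omega_mx s = 1%:M.
  apply/matrixP => i k.
  have -> : (D *m omega_mx s) i k = (row i D *m omega_mx s) 0 k by rewrite -row_mul [RHS]mxE.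
  by rewrite rowK mul_omega_mx dualP mxE.
apply/eqP; rewrite eqn_leq rank_leq_col /=.
by rewrite -{1}(mxrank1 R (size s)) -DM1 mxrankM_maxr.
Qed.

Lemma rank_annihilator s (dual : seq 'rV[R]_(d + d)) :
  (forall i k : 'I_(size s), omega dual`_i s`_k = (i == k)%:R) ->
  \rank (annihilator s) = (d + d - size s)%N.
Proof. by move=> /rank_omega_mx rankM; rewrite mxrank_ker rankM. Qed.

Lemma rank_annihilator1 {c1 c2} : omega c1 c2 = 1 ->
  \rank (annihilator [:: c1]) = (d + d).-1.
Proof.
move=> c12; rewrite (rank_annihilator _ [:: - c2]) ?subn1 // => -[[|//] ?] [[|//] ?].
by rewrite /= omegaNl omegaC c12 opprK.
Qed.

Lemma rank_annihilator2 {c1 c2} : omega c1 c2 = 1 ->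
  \rank (annihilator [:: c1; c2]) = (d + d - 2)%N.
Proof.
move=> c12; rewrite (rank_annihilator _ [:: - c2; c1]) //.
move=> [[|[|//]] ?] [[|[|//]] ?] /=; rewrite ?omegaNl ?omegavv ?oppr0 //.
  by rewrite omegaC c12 opprK.
Qed.

End Annihilator.

Arguments dgamma : simpl never.

Section Curve.
Context {R : realType} {d : nat} {gamma : R -> 'rV[R]_(d + d)}.
Hypothesis gamma_smooth : forall (k : nat) (t : R), derivable (dgamma k gamma) t 1.
Local Notation g k := (dgamma k gamma).
Implicit Types (x y : 'rV[R]_(d + d) * R).

Lemma is_diff_dgamma k x :
  is_diff x (fun z : 'rV[R]_(d + d) * R => g k z.2) (fun y => y.2 *: g k.+1 x.2).
Proof.
have dgk : is_diff (x.2) (g k) (fun h => h *: g k.+1 x.2).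
  by apply: DiffDef; [exact/derivable1_diffP | rewrite deriv1E].
exact: is_diff_comp (is_diff_snd x) dgk.
Qed.

Lemma dPsiE x y : 'd (Psi gamma) x y = y.2 *: g 1 x.2 + y.1.
Proof.
by have [_ ->] : is_diff x (Psi gamma) _ := is_diffD (is_diff_dgamma 0 x) (is_diff_fst x).
Qed.

Lemma dX_eqE x y :
  'd (X_eq gamma) x y = y.2 * omega x.1 (g 2 x.2) + omega y.1 (g 1 x.2).
Proof.
have [_ ->] : is_diff x (X_eq gamma) _ :=
  is_diff_omega (is_diff_fst x) (is_diff_dgamma 1 x).
by rewrite omegaZr.
Qed.

Lemma dproj_DeltaE x y : 'd (@proj_Delta R d) x y = y.1.
Proof. by have [_ ->] : is_diff x (@proj_Delta R d) _ := is_diff_fst x. Qed.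

Lemma dDelta_eqE x y : 'd (Delta_eq gamma) x y =
  (y.2 * omega (x.1 - gamma x.2) (g 2 x.2) + omega (y.1 - y.2 *: g 1 x.2) (g 1 x.2),
   y.2 * omega (x.1 - gamma x.2) (g 3 x.2) + omega (y.1 - y.2 *: g 1 x.2) (g 2 x.2)).
Proof.
have dQ : is_diff x (fun z => z.1 - gamma z.2) (fun y => y.1 - y.2 *: g 1 x.2) :=
  is_diffB (is_diff_fst x) (is_diff_dgamma 0 x).
have [_ ->] := is_diff_pair (is_diff_omega dQ (is_diff_dgamma 1 x))
                            (is_diff_omega dQ (is_diff_dgamma 2 x)).
(* Abstracting the derivatives keeps unification from unfolding [derive1n]. *)
move: (g 1 x.2) (g 2 x.2) (g 3 x.2) (x.1 - gamma x.2) => c1 c2 c3 Q.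
by rewrite !omegaZr.
Qed.

End Curve.

Section Wall.
Context {R : realType} {d : nat} {gamma : R -> 'rV[R]_(d + d)}.
Hypothesis gamma_smooth : forall (k : nat) (t : R), derivable (dgamma k gamma) t 1.
Hypothesis gamma_normalized :
  forall t : R, omega (dgamma 1 gamma t) (dgamma 2 gamma t) = 1.
Local Notation g k := (dgamma k gamma).
Implicit Types (P v w : 'rV[R]_(d + d)) (t : R).

Lemma Delta_eq0P P t : Delta_eq gamma (P, t) = (0, 0) <->
  omega P (g 1 t) = omega (gamma t) (g 1 t) /\
  omega P (g 2 t) = omega (gamma t) (g 2 t).
Proof.
rewrite /Delta_eq /= !omegaBl; split=> [[/eqP + /eqP]|[-> ->]]; last by rewrite !subrr.
by rewrite !subr_eq0 => /eqP-> /eqP->.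
Qed.

Lemma dPsi_tangent_X_onto v t : omega v (g 2 t) != 0 ->
  forall w, exists2 y, tangent_X gamma (v, t) y & 'd (Psi gamma) (v, t) y = w.
Proof.
move=> v2 w; pose s := - omega w (g 1 t) / omega v (g 2 t).
exists (w - s *: g 1 t, s); last by rewrite dPsiE //= addrC subrK.
by rewrite /tangent_X /= dX_eqE // omegaBl omegaZl omegavv mulr0 subr0 divfK // addNr.
Qed.

Lemma dPsi_tangent_X_miss v t y : omega v (g 2 t) = 0 ->
  tangent_X gamma (v, t) y -> 'd (Psi gamma) (v, t) y <> g 2 t.
Proof.
case: y => a s v2; rewrite /tangent_X /= dX_eqE // dPsiE //= v2 mulr0 add0r => a1 dPsi_g2.
have := gamma_normalized t; rewrite -dPsi_g2 omegaC omegaDl omegaZl omegavv a1.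
by rewrite mulr0 addr0 oppr0 => /eqP; rewrite eq_sym oner_eq0.
Qed.

Lemma wallP P : wall gamma P <-> exists t, Delta_eq gamma (P, t) = (0, 0).
Proof.
split=> [[[v t] [/= Xvt <- [w dPsi_miss_w]]] | [t [Q1 Q2]]].
  exists t; rewrite /Delta_eq /Psi /= addrAC subrr add0r; congr pair; first exact: Xvt.
  case: (eqVneq (omega v (g 2 t)) 0) => // /dPsi_tangent_X_onto/(_ w)[y Ty dPsi_w].
  by case: (dPsi_miss_w y Ty).
exists (P - gamma t, t); split=> //; first by rewrite /Psi /= addrC subrK.
exists (g 2 t) => y; exact: dPsi_tangent_X_miss.
Qed.

Lemma tangent_DeltaP {P t} : omega (P - gamma t) (g 2 t) = 0 -> forall a s,
  tangent_Delta gamma (P, t) (a, s) <->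
  omega a (g 1 t) = 0 /\ s * (1 - omega (P - gamma t) (g 3 t)) = omega a (g 2 t).
Proof.
move=> Q2 a s; rewrite /tangent_Delta /= dDelta_eqE //=; have := gamma_normalized t.
move: (g 1 t) (g 2 t) (g 3 t) (P - gamma t) Q2 => c1 c2 c3 Q -> c12.
rewrite mulr0 add0r !omegaBl !omegaZl omegavv c12 mulr0 subr0 mulr1.
by split=> [[-> ?]|[-> ?]]; [split | apply: congr2]; lra.
Qed.

Lemma rank_dproj_Delta_regular P t :
  Delta_eq gamma (P, t) = (0, 0) -> omega (P - gamma t) (g 3 t) != 1 ->
  rank_dproj_ge gamma (P, t) (d + d).-1.
Proof.
case=> _ Q2 Q3.
have [B freeB sub_B] := exists_row_base (rank_annihilator1 (gamma_normalized t)).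
exists B; split=> // i; set a := row i B.
have /sub_annihilatorP a1 := submx_trans (row_sub i B) sub_B.
exists (a, omega a (g 2 t) / (1 - omega (P - gamma t) (g 3 t))).
split; last by rewrite dproj_DeltaE.
apply/(tangent_DeltaP Q2); split; first by rewrite a1 ?mem_head.
by rewrite divfK // subr_eq0 eq_sym.
Qed.

Lemma rank_dproj_Delta_degenerate P t :
  Delta_eq gamma (P, t) = (0, 0) -> omega (P - gamma t) (g 3 t) = 1 ->
  ~ rank_dproj_ge gamma (P, t) (d + d).-1.
Proof.
case=> _ Q2 Q3 [B [freeB tangent_B]].
have sub_B : (B <= annihilator [:: g 1 t; g 2 t])%MS.
  apply/row_subP => i; have [[a s] [/(tangent_DeltaP Q2)]] := tangent_B i.
  rewrite Q3 subrr mulr0 dproj_DeltaE /= => -[a1 a2] <-.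
  by apply/sub_annihilatorP => c; rewrite !inE => /orP[]/eqP->.
have := mxrankS sub_B; rewrite (eqP freeB) (rank_annihilator2 (gamma_normalized t)).
have /dim_gt0_omega : omega (g 1 t) (g 2 t) != 0 by rewrite gamma_normalized oner_neq0.
by lia.
Qed.

Lemma wall_singP P : wall_sing gamma P <->
  exists t, Delta_eq gamma (P, t) = (0, 0) /\ omega (P - gamma t) (g 3 t) = 1.
Proof.
split=> [[t [DeltaPt rank_lt]]|[t [DeltaPt Q3]]]; exists t; split=> //.
  case: (eqVneq (omega (P - gamma t) (g 3 t)) 1) => // Q3.
  by case: rank_lt; exact: rank_dproj_Delta_regular.
exact: rank_dproj_Delta_degenerate.
Qed.

End Wall.

Theorem mainTheorem9 (R : realType) (d : nat) (gamma : R -> 'rV[R]_(d + d))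
  (gamma_smooth : forall (k : nat) (t : R), derivable (dgamma k gamma) t 1)
  (gamma_closed : forall t : R, gamma (t + 1) = gamma t)
  (gamma_normalized : forall t : R,
      omega (dgamma 1 gamma t) (dgamma 2 gamma t) = 1) :
  (forall P : 'rV[R]_(d + d),
     wall gamma P <->
     exists t : R,
       omega P (dgamma 1 gamma t) = omega (gamma t) (dgamma 1 gamma t) /\
       omega P (dgamma 2 gamma t) = omega (gamma t) (dgamma 2 gamma t)) /\
  (forall P : 'rV[R]_(d + d),
     wall_sing gamma P <->
     exists t : R,
       [/\ omega P (dgamma 1 gamma t) = omega (gamma t) (dgamma 1 gamma t),
           omega P (dgamma 2 gamma t) = omega (gamma t) (dgamma 2 gamma t) &
           omega P (dgamma 3 gamma t) =
             omega (dgamma 1 gamma t) (dgamma 2 gamma t)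
             + omega (gamma t) (dgamma 3 gamma t)]).
Proof.
(* Periodicity is not used: both descriptions are local in t. *)
split=> P.
  apply: iff_trans (wallP gamma_smooth gamma_normalized P) _.
  by split=> -[t /Delta_eq0P DeltaPt]; exists t.
apply: iff_trans (wall_singP gamma_smooth gamma_normalized P) _.
split=> -[t].
  move=> [/Delta_eq0P[P1 P2] P3]; exists t; split; [exact: P1 | exact: P2 |].
  by apply/eqP; rewrite gamma_normalized -subr_eq -omegaBl P3.
move=> [P1 P2 P3]; exists t; split; first exact/Delta_eq0P.
by rewrite omegaBl P3 gamma_normalized addrK.
Qed.
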